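(* Let $k$ be an infinite field, $<$ a term order on $k[X_1,\ldots,X_n]$ with $X_1<\cdots<X_n$, and $A\subseteq k^n$ a finite union of pairwise distinct affine $d$-planes. For each $J\subseteq\{1,\ldots,n\}$ with $\#J=d$, let $A_J$ be the union of those irreducible components of $A$ whose minimal free variables are $\{X_j;\ j\in J\}$, and let $m_J$ be their number. Assume that for every such $J$, every $d$-plane contained in $D(A_J)$ is parallel to $\bigoplus_{j\in J}\mathbb{N}e_j$ and the number of these $d$-planes is $m_J$. Then the union $E(A)$ of all $d$-planes contained in $D(A)$ equals $\bigcup_J E(A_J)$, where $E(A_J)$ is the union of all $d$-planes contained in $D(A_J)$; consequently, for every $J$ with $\#J=d$, the number of $d$-planes in $D(A)$ parallel to $\bigoplus_{j\in J}\mathbb{N}e_j$ equals $m_J$.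
   Context: $I(A)$ is the ideal of polynomials vanishing on $A\subseteq k^n$ (with $I(\emptyset)=k[X]$); ${\rm LE}(f)$ is the exponent of the leading monomial of $f\neq0$ w.r.t. $<$; $C(A)=\{{\rm LE}(f);\ 0\neq f\in I(A)\}$, $D(A)=\mathbb{N}^n\setminus C(A)$. A $d$-plane in $\delta\subseteq\mathbb{N}^n$ is a subset of $\delta$ of the form $\gamma+\bigoplus_{j\in J}\mathbb{N}e_j$ with $\#J=d$ and $\gamma_j=0$ for $j\in J$, said to be parallel to $\bigoplus_{j\in J}\mathbb{N}e_j$. An affine $d$-plane is a translate of a $d$-dimensional linear subspace of $k^n$. $\{X_j;\ j\in J\}$ ($\#J=d$) is a set of free variables of an affine $d$-plane $A'$ if the coordinate projection $A'\to k^J$ is bijective; these are the minimal free variables of $A'$ if moreover for no $j\in J$ and $i\notin J$ with $i<j$ is $\{X_j;\ j\in(J\setminus\{j\})\cup\{i\}\}$ a set of free variables of $A'$. *)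

From HB Require Import structures.
From mathcomp Require Import all_boot all_order all_algebra.
From Stdlib Require Import ClassicalEpsilon.
Set Implicit Arguments. Unset Strict Implicit. Unset Printing Implicit Defensive.
Import GRing.Theory.
Local Open Scope ring_scope.

(* Exponent vectors in N^n (indices 'I_n, X_{i+1} <-> i). *)
Definition mon (n : nat) := {ffun 'I_n -> nat}.
Definition madd n (a b : mon n) : mon n := [ffun i => (a i + b i)%N].
Definition mzero n : mon n := [ffun _ => 0%N].
Definition munit n (i : 'I_n) : mon n := [ffun l => nat_of_bool (l == i)].

Definition term_order n (le : rel (mon n)) : Prop :=
  [/\ reflexive le, antisymmetric le, transitive le, total le
    & (forall a, le (mzero n) a)] /\
  (forall a b c, le a b -> le (madd a c) (madd b c)).
Definition vars_increasing n (le : rel (mon n)) : Prop :=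
  forall i j : 'I_n, (i < j)%N -> le (munit i) (munit j) /\ munit i != munit j.

Definition mon_eval (k : fieldType) n (x : 'rV[k]_n) (a : mon n) : k :=
  \prod_(i < n) x 0 i ^+ a i.

(* A polynomial is given by a coefficient function c with finite support
   contained in the duplicate-free list s; its value at x. *)
Definition poly_eval (k : fieldType) n (c : mon n -> k) (s : seq (mon n))
  (x : 'rV[k]_n) : k := \sum_(a <- s) c a * mon_eval x a.

(* C(A): leading exponents of nonzero polynomials vanishing on A. *)
Definition Cset (k : fieldType) n (le : rel (mon n)) (A : 'rV[k]_n -> Prop)
  (e : mon n) : Prop :=
  exists (c : mon n -> k) (s : seq (mon n)),
    [/\ uniq s, (forall a, c a != 0 -> a \in s),
        c e != 0, (forall a, c a != 0 -> le a e)
      & (forall x, A x -> poly_eval c s x = 0)].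

Definition Dset (k : fieldType) n (le : rel (mon n)) (A : 'rV[k]_n -> Prop)
  (e : mon n) : Prop := ~ Cset le A e.

Definition nplane n (g : mon n) (J : {set 'I_n}) (e : mon n) : Prop :=
  exists t : mon n, (forall i, i \notin J -> t i = 0%N) /\ e = madd g t.

Definition dplane_in n (d : nat) (delta : mon n -> Prop) (g : mon n)
  (J : {set 'I_n}) : Prop :=
  [/\ #|J| = d, (forall j, j \in J -> g j = 0%N)
    & (forall e, nplane g J e -> delta e)].

Definition Eset n (d : nat) (delta : mon n -> Prop) (e : mon n) : Prop :=
  exists g J, dplane_in d delta g J /\ nplane g J e.

Definition card_eq (T : eqType) (P : T -> Prop) (m : nat) : Prop :=
  exists s : seq T, [/\ uniq s, (forall x, x \in s <-> P x) & size s = m].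

Definition decP (P : Prop) : bool :=
  if excluded_middle_informative P then true else false.
Definition pcard (T : finType) (P : T -> Prop) : nat := #|[pred x | decP (P x)]|.

(* Affine d-plane p + rowspace(B), B : 'M_(d,n) row-free (dimension d). *)
Definition in_aplane (k : fieldType) n d (p : 'rV[k]_n) (B : 'M[k]_(d, n))
  (x : 'rV[k]_n) : Prop := (x - p <= B)%MS.

Definition free_vars (k : fieldType) n d (p : 'rV[k]_n) (B : 'M[k]_(d, n))
  (J : {set 'I_n}) : Prop :=
  #|J| = d /\
  forall y : 'rV[k]_n, exists! x, in_aplane p B x /\ (forall j, j \in J -> x 0 j = y 0 j).

Definition min_free_vars (k : fieldType) n d (p : 'rV[k]_n) (B : 'M[k]_(d, n))
  (J : {set 'I_n}) : Prop :=
  free_vars p B J /\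
  ~ (exists (j i : 'I_n), [/\ j \in J, i \notin J, (i < j)%N &
        free_vars p B (i |: (J :\ j))]).

From HB Require Import structures.
From mathcomp Require Import all_boot all_order all_algebra.
From Stdlib Require Import Classical.
Set Implicit Arguments. Unset Strict Implicit. Unset Printing Implicit Defensive.
Import GRing.Theory.
Local Open Scope ring_scope.

(* Since A_J is contained in A, D(A_J) is contained in D(A), so
   every d-plane of D(A_J) is a d-plane of D(A).  The converse holds for
   d-planes parallel to N^J: let g + N^J lie in D(A) and suppose some e in it
   belonged to C(A_J).  For every component of A whose minimal free variables
   are not {X_j; j in J}, some X_i with i in J is the leading monomial of an
   affine equation of that component.  Multiplying the polynomial of e by all
   these equations yields a polynomial vanishing on A whose leading exponent
   e + v (v supported on J) still lies in g + N^J: a contradiction.  Hence the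
   d-planes of D(A) parallel to N^J are exactly those of D(A_J), which gives
   both the description of E(A) and the count m_J.  (This argument does not
   use that k is infinite, that the components are distinct, or that the
   d-planes of D(A_J) are all parallel to N^J.)
   The file develops: arithmetic of exponents and term orders; leading
   exponents of products; affine equations of a plane and their leading
   monomials; the linear algebra characterising minimal free variables; and
   finally the key lemma dplane_DA_DAJ, from which the theorem follows. *)

Definition supp_in n (J : {set 'I_n}) (v : mon n) : Prop :=
  forall i, i \notin J -> v i = 0%N.

Lemma maddC n (a b : mon n) : madd a b = madd b a.
Proof. by apply/ffunP => i; rewrite !ffunE addnC. Qed.

Lemma maddA n (a b c : mon n) : madd a (madd b c) = madd (madd a b) c.
Proof. by apply/ffunP => i; rewrite !ffunE addnA. Qed.

Lemma madd0 n (a : mon n) : madd a (mzero n) = a.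
Proof. by apply/ffunP => i; rewrite !ffunE addn0. Qed.

Lemma maddI n (a b c : mon n) : madd a c = madd b c -> a = b.
Proof.
by move/ffunP => E; apply/ffunP => i; move: (E i); rewrite !ffunE; apply: addIn.
Qed.

Lemma supp_in_madd n (J : {set 'I_n}) (u v : mon n) :
  supp_in J u -> supp_in J v -> supp_in J (madd u v).
Proof. by move=> Hu Hv i iJ; rewrite ffunE Hu ?Hv. Qed.

Lemma supp_in_munit n (J : {set 'I_n}) i : i \in J -> supp_in J (munit i).
Proof. by move=> iJ l lJ; rewrite ffunE; case: eqP => // E; rewrite E iJ in lJ. Qed.

Lemma sum_indicator (k : fieldType) (T : eqType) (r : seq T) (x : T) (G : T -> k) :
  uniq r -> x \in r -> \sum_(e <- r) (x == e)%:R * G e = G x.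
Proof.
move=> ur xr; rewrite (bigD1_seq x) //= eqxx mul1r big1 ?addr0 // => e ne.
by rewrite eq_sym (negbTE ne) mul0r.
Qed.

Lemma mon_eval_madd (k : fieldType) n (x : 'rV[k]_n) a b :
  mon_eval x (madd a b) = mon_eval x a * mon_eval x b.
Proof. by rewrite /mon_eval -big_split /=; apply: eq_bigr => i _; rewrite ffunE exprD. Qed.

Section TermOrder.
Variables (n : nat) (le : rel (mon n)).
Hypothesis Hto : term_order le.

Lemma to_refl : reflexive le. Proof. by case: Hto => [[]]. Qed.
Lemma to_trans : transitive le. Proof. by case: Hto => [[]]. Qed.
Lemma to_antisym : antisymmetric le. Proof. by case: Hto => [[]]. Qed.
Lemma to_ge0 a : le (mzero n) a. Proof. by case: Hto => [[]]. Qed.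
Lemma to_addr a b c : le a b -> le (madd a c) (madd b c).
Proof. by case: Hto => _; apply. Qed.

Lemma le_madd a b e1 e2 : le a e1 -> le b e2 -> le (madd a b) (madd e1 e2).
Proof.
move=> H1 H2; apply: (@to_trans (madd e1 b)); first exact: to_addr.
by rewrite (maddC e1) (maddC e1); exact: to_addr.
Qed.

Lemma madd_lead a b e1 e2 :
  le a e1 -> le b e2 -> madd a b = madd e1 e2 -> a = e1 /\ b = e2.
Proof.
move=> H1 H2 E.
have L1 : le (madd a b) (madd e1 b) by exact: to_addr.
have L2 : le (madd e1 b) (madd e1 e2) by rewrite (maddC e1) (maddC e1); exact: to_addr.
have E1 : madd a b = madd e1 b by apply: to_antisym; rewrite L1 E L2.
have Ea := maddI E1; split => //; subst a.
by apply: (@maddI _ _ _ e1); rewrite maddC E maddC.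
Qed.
End TermOrder.

Section LeadingExponents.
Variables (k : fieldType) (n : nat) (le : rel (mon n)).
Hypothesis Hto : term_order le.

Lemma Cset_mono (S S' : 'rV[k]_n -> Prop) e :
  Cset le S e -> (forall x, S' x -> S x) -> Cset le S' e.
Proof. by move=> [c [s [u H1 H2 H3 H4]]] HS; exists c, s; split => // x /HS; exact: H4. Qed.

Lemma Dset_mono (S S' : 'rV[k]_n -> Prop) e :
  (forall x, S x -> S' x) -> Dset le S e -> Dset le S' e.
Proof. by move=> HS D C; apply: D; apply: Cset_mono C HS. Qed.

Section Product.
Variables (c1 c2 : mon n -> k) (s1 s2 : seq (mon n)) (e1 e2 : mon n).
Hypotheses (u1 : uniq s1) (u2 : uniq s2).
Hypotheses (sup1 : forall a, c1 a != 0 -> a \in s1) (sup2 : forall a, c2 a != 0 -> a \in s2).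
Hypotheses (lead1 : forall a, c1 a != 0 -> le a e1) (lead2 : forall a, c2 a != 0 -> le a e2).

Definition mulc (e : mon n) : k :=
  \sum_(a <- s1) \sum_(b <- s2) (madd a b == e)%:R * (c1 a * c2 b).

Definition mul_supp : seq (mon n) := undup [seq madd a b | a <- s1, b <- s2].

Lemma mulc_support e :
  mulc e != 0 -> exists a b, [/\ c1 a != 0, c2 b != 0 & madd a b = e].
Proof.
move=> Hne; apply: NNPP => Hn; move/eqP: Hne; apply.
rewrite /mulc big1_seq // => a _; rewrite big1_seq // => b _.
case: (eqVneq (madd a b) e) => [E|_]; last by rewrite mul0r.
case: (eqVneq (c1 a) 0) => [->|na]; first by rewrite mul0r mulr0.
case: (eqVneq (c2 b) 0) => [->|nb]; first by rewrite !mulr0.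
by exfalso; apply: Hn; exists a, b.
Qed.

Lemma mulc_in_supp e : mulc e != 0 -> e \in mul_supp.
Proof.
move=> /mulc_support [a [b [na nb <-]]]; rewrite mem_undup.
by apply/allpairsP; exists (a, b); split => //; [apply: sup1 | apply: sup2].
Qed.

Lemma mulc_le e : mulc e != 0 -> le e (madd e1 e2).
Proof. by move=> /mulc_support [a [b [na nb <-]]]; apply: le_madd; auto. Qed.

Lemma mulc_lead : c1 e1 != 0 -> c2 e2 != 0 -> mulc (madd e1 e2) = c1 e1 * c2 e2.
Proof.
move=> n1 n2.
have term a b : (madd a b == madd e1 e2)%:R * (c1 a * c2 b) =
    (e1 == a)%:R * ((e2 == b)%:R * (c1 e1 * c2 e2)) :> k.
  case: (eqVneq (c1 a) 0) => [z|na].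
    rewrite z mul0r mulr0; case: (eqVneq e1 a) => [E|_]; last by rewrite mul0r.
    by rewrite E z mul0r !mulr0.
  case: (eqVneq (c2 b) 0) => [z|nb].
    rewrite z !mulr0; case: (eqVneq e2 b) => [E|_]; last by rewrite mul0r mulr0.
    by rewrite E z !mulr0.
  case: (eqVneq (madd a b) (madd e1 e2)) => [E|NE].
    by have [-> ->] := madd_lead Hto (lead1 na) (lead2 nb) E; rewrite !eqxx !mul1r.
  by case: (eqVneq e1 a) NE => [<-|]; case: (eqVneq e2 b) => [<-|];
    rewrite ?eqxx ?mul0r ?mulr0.
rewrite /mulc (eq_bigr (fun a => (e1 == a)%:R *
    \sum_(b <- s2) (e2 == b)%:R * (c1 e1 * c2 e2))); last first.
  by move=> a _; rewrite mulr_sumr; apply: eq_bigr => b _; rewrite term.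
by rewrite sum_indicator ?sup1 // sum_indicator ?sup2.
Qed.

Lemma mulc_eval x : poly_eval mulc mul_supp x = poly_eval c1 s1 x * poly_eval c2 s2 x.
Proof.
rewrite /poly_eval /mulc /mul_supp big_distrl /=.
under eq_bigr do rewrite mulr_suml.
rewrite exchange_big /=; apply: eq_big_seq => a ain.
under eq_bigr do rewrite mulr_suml.
rewrite big_distrr /= exchange_big /=; apply: eq_big_seq => b bin.
under eq_bigr do rewrite -mulrA.
rewrite (@sum_indicator _ _ _ _ (fun e => c1 a * c2 b * mon_eval x e)) ?undup_uniq //.
  by rewrite mon_eval_madd mulrACA.
by rewrite mem_undup; apply/allpairsP; exists (a, b).
Qed.
End Product.

(* C(S1 u S2) contains C(S1) + C(S2): multiply the two vanishing polynomials. *)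
Lemma Cset_mul (S1 S2 : 'rV[k]_n -> Prop) e1 e2 :
  Cset le S1 e1 -> Cset le S2 e2 -> Cset le (fun x => S1 x \/ S2 x) (madd e1 e2).
Proof.
move=> [c1 [s1 [u1 A1 B1 C1 D1]]] [c2 [s2 [u2 A2 B2 C2 D2]]].
exists (mulc c1 c2 s1 s2), (mul_supp s1 s2); split.
- exact: undup_uniq.
- exact: mulc_in_supp.
- by rewrite mulc_lead // mulf_neq0.
- exact: mulc_le.
- by move=> x [/D1|/D2] Hx; rewrite mulc_eval Hx ?mul0r ?mulr0.
Qed.

Lemma Cset_shift_union (I : eqType) (T : I -> 'rV[k]_n -> Prop)
    (S : 'rV[k]_n -> Prop) (J : {set 'I_n}) e (r : seq I) :
  Cset le S e ->
  (forall c, c \in r ->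
     (forall x, T c x -> S x) \/ exists2 i, i \in J & Cset le (T c) (munit i)) ->
  exists v, supp_in J v /\
    Cset le (fun x => S x \/ exists2 c, c \in r & T c x) (madd e v).
Proof.
move=> He; elim: r => [|c r IH] HT.
  exists (mzero n); split; first by move=> i _; rewrite ffunE.
  by rewrite madd0; apply: Cset_mono He _ => x [|[c]] //; rewrite in_nil.
have [v [vJ Hv]] : exists v, supp_in J v /\
    Cset le (fun x => S x \/ exists2 c, c \in r & T c x) (madd e v).
  by apply: IH => c' c'r; apply: HT; rewrite inE c'r orbT.
have [TcS | [i iJ Ci]] := HT c (mem_head c r).
  exists v; split => //; apply: Cset_mono Hv _ => x [Sx|[c']].
    by left.
  rewrite inE => /orP [/eqP -> /TcS|c'r Tx]; first by left.
  by right; exists c'.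
exists (madd v (munit i)); split; first by apply: supp_in_madd => //; apply: supp_in_munit.
rewrite maddA; apply: Cset_mono (Cset_mul Hv Ci) _ => x [Sx|[c']]; first by left; left.
rewrite inE => /orP [/eqP -> Tx|c'r Tx]; first by right.
by left; right; exists c'.
Qed.
End LeadingExponents.

Definition last_nz (k : fieldType) n (a : 'rV[k]_n) (i : 'I_n) : Prop :=
  a 0 i != 0 /\ forall l : 'I_n, (i < l)%N -> a 0 l = 0.

Lemma exists_last_nz (k : fieldType) n (a : 'rV[k]_n) :
  a != 0 -> exists i, last_nz a i.
Proof.
move=> an0.
have [i0 ai0] : exists i0, a 0 i0 != 0.
  apply: NNPP => H; move/eqP: an0; apply; apply/matrixP => r l.
  rewrite ord1 mxE; apply: NNPP => H'; apply: H; exists l; exact/eqP.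
have [i ai Hm] := @arg_maxnP _ i0 (fun i => a 0 i != 0) (fun i => nat_of_ord i) ai0.
exists i; split => // l il; apply: NNPP => /eqP al.
by have := Hm _ al; rewrite /geq /= leqNgt il.
Qed.

Section AffinePolynomials.
Variables (k : fieldType) (n : nat).

Lemma munitE (l j : 'I_n) : munit l j = (j == l) :> nat.
Proof. by rewrite ffunE. Qed.

Lemma munit_inj : injective (@munit n).
Proof. by move=> l l' /ffunP /(_ l); rewrite !ffunE eqxx; case: eqP. Qed.

Lemma munit_neq0 l : (munit l == mzero n) = false.
Proof. by apply/eqP => /ffunP /(_ l); rewrite !ffunE eqxx. Qed.

Lemma mon_eval0 (x : 'rV[k]_n) : mon_eval x (mzero n) = 1.
Proof. by rewrite /mon_eval big1 // => i _; rewrite ffunE expr0. Qed.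

Lemma mon_eval_unit (x : 'rV[k]_n) l : mon_eval x (munit l) = x 0 l.
Proof.
rewrite /mon_eval (bigD1 l) //= munitE eqxx expr1 big1 ?mulr1 // => j nj.
by rewrite munitE; case: eqP => // E; rewrite E eqxx in nj.
Qed.

Definition aff_coef (a : 'rV[k]_n) (a0 : k) (e : mon n) : k :=
  \sum_l (e == munit l)%:R * a 0 l + (e == mzero n)%:R * a0.

Definition aff_supp : seq (mon n) := mzero n :: [seq munit l | l <- enum 'I_n].

Lemma aff_coef_unit a a0 l : aff_coef a a0 (munit l) = a 0 l.
Proof.
rewrite /aff_coef munit_neq0 mul0r addr0 (bigD1 l) //= eqxx mul1r big1 ?addr0 //.
move=> j nj; case: eqP => [/munit_inj E|_]; last by rewrite mul0r.
by rewrite E eqxx in nj.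
Qed.

Lemma aff_coef0 a a0 : aff_coef a a0 (mzero n) = a0.
Proof.
by rewrite /aff_coef eqxx mul1r big1 ?add0r // => l _; rewrite eq_sym munit_neq0 mul0r.
Qed.

Lemma aff_supp_uniq : uniq aff_supp.
Proof.
rewrite /= map_inj_uniq ?enum_uniq ?andbT; last exact: munit_inj.
by apply/mapP => [[l _ /eqP]]; rewrite eq_sym munit_neq0.
Qed.

Lemma aff_coef_supp a a0 e : aff_coef a a0 e != 0 -> e \in aff_supp.
Proof.
apply: contraR => ens; have e0 : (e == mzero n) = false.
  by apply: negbTE; apply: contra ens => /eqP ->; rewrite mem_head.
rewrite /aff_coef e0 mul0r addr0 big1 // => l _.
case: eqP => [E|]; last by rewrite mul0r.
by move: ens; rewrite E inE => /norP [_ /mapP []]; exists l; rewrite ?mem_enum.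
Qed.

Lemma aff_eval a a0 x : poly_eval (aff_coef a a0) aff_supp x = \sum_l a 0 l * x 0 l + a0.
Proof.
rewrite /poly_eval big_cons aff_coef0 mon_eval0 mulr1 big_map big_enum /= addrC.
by congr (_ + _); apply: eq_bigr => l _; rewrite aff_coef_unit mon_eval_unit.
Qed.
End AffinePolynomials.

Section Coordinates.
Variables (k : fieldType) (n : nat).

Definition dot (v w : 'rV[k]_n) : k := \sum_l v 0 l * w 0 l.

Lemma dotD (v w u : 'rV[k]_n) : dot v (w + u) = dot v w + dot v u.
Proof. by rewrite /dot -big_split; apply: eq_bigr => l _; rewrite mxE mulrDr. Qed.

Lemma dot_delta (v : 'rV[k]_n) l : dot v (delta_mx 0 l) = v 0 l.
Proof.
rewrite /dot (bigD1 l) //= mxE !eqxx mulr1 big1 ?addr0 // => j nj.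
by rewrite mxE eqxx (negbTE nj) mulr0.
Qed.

Lemma dot_orth d (B : 'M[k]_(d, n)) v w : (v <= B)%MS -> w *m B^T = 0 -> dot v w = 0.
Proof.
move=> /submxP [z ->] wB.
have : (z *m B *m w^T) 0 0 = 0 by rewrite -mulmxA -[B]trmxK -trmx_mul wB trmx0 mulmx0 mxE.
move=> H; rewrite -[RHS]H mxE /dot.
by apply: eq_bigr => l _; rewrite [w^T _ _]mxE.
Qed.

Variable J : {set 'I_n}.

Definition coordJ : 'M[k]_(n, #|J|) := \matrix_(l, r) (l == enum_val r)%:R.

Lemma coordJ_col (v : 'rV[k]_n) r : (v *m coordJ) 0 r = v 0 (enum_val r).
Proof.
rewrite mxE (bigD1 (enum_val r)) //= mxE eqxx mulr1 big1 ?addr0 // => j nj.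
by rewrite mxE (negbTE nj) mulr0.
Qed.

Lemma coordJ_supp (v : 'rV[k]_n) : (v <= coordJ^T)%MS -> forall l, l \notin J -> v 0 l = 0.
Proof.
move=> /submxP [z ->] l lJ; rewrite mxE big1 // => r _.
rewrite !mxE; case: eqP => [E|]; last by rewrite mulr0.
by move: lJ; rewrite E enum_valP.
Qed.

Lemma rank_coordJ : \rank coordJ^T = #|J|.
Proof.
apply/eqP/row_freeP; exists coordJ; apply/matrixP => r r'.
rewrite !mxE (bigD1 (enum_val r)) //= !mxE eqxx mul1r big1 ?addr0.
  by rewrite (inj_eq enum_val_inj).
by move=> j nj; rewrite !mxE (negbTE nj) mul0r.
Qed.
End Coordinates.

(* A linear form a vanishing on the direction of the plane p + <B> gives the
   affine equation a.(x - p) = 0 of the plane; its leading monomial is X_i for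
   the last nonzero coordinate i of a, because the variables increase. *)
Lemma lin_Cset (k : fieldType) n (le : rel (mon n)) d (p : 'rV[k]_n)
    (B : 'M[k]_(d, n)) (a : 'rV[k]_n) (i : 'I_n) :
  term_order le -> vars_increasing le ->
  a *m B^T = 0 -> last_nz a i -> Cset le (in_aplane p B) (munit i).
Proof.
move=> Hto Hvi aB [ai amax].
exists (aff_coef a (- \sum_l a 0 l * p 0 l)), (aff_supp n); split.
- exact: aff_supp_uniq.
- exact: aff_coef_supp.
- by rewrite aff_coef_unit.
- move=> e /[dup] ce /aff_coef_supp; rewrite inE => /orP [/eqP ->|/mapP [l _ El]].
    exact: to_ge0.
  subst e; move: ce; rewrite aff_coef_unit => al.
  case: (ltngtP i l) => [il|li|/val_inj ->]; last exact: to_refl.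
    by rewrite (amax _ il) eqxx in al.
  by case: (Hvi _ _ li).
- move=> x xA; rewrite aff_eval -sumrB -[RHS](dot_orth xA aB).
  by apply: eq_bigr => l _; rewrite !mxE mulrBl ![_ * a 0 l]mulrC.
Qed.

Section MinimalFreeVariables.
Variables (k : fieldType) (n d : nat) (p : 'rV[k]_n) (B : 'M[k]_(d, n)).
Variable J : {set 'I_n}.
Hypotheses (rfB : row_free B) (cJ : #|J| = d).
Hypothesis last_out :
  forall (a : 'rV[k]_n) i, a *m B^T = 0 -> last_nz a i -> i \notin J.

(* k^n is the direct sum of the annihilator of B and the vectors supported
   on J: their intersection is 0 and their dimensions add up to n. *)
Lemma ker_coord_decomp (v : 'rV[k]_n) :
  exists w u, [/\ v = w + u, w *m B^T = 0 & forall l, l \notin J -> u 0 l = 0].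
Proof.
pose W := kermx B^T.
have capW : (W :&: (coordJ k J)^T)%MS = 0.
  apply/eqP/rowV0P => w; rewrite sub_capmx => /andP [wW wC].
  apply: NNPP => /eqP /exists_last_nz [i [wi wl]].
  have /negP := last_out (sub_kermxP wW) (conj wi wl).
  by apply; apply: contraLR wi => iJ; rewrite (coordJ_supp wC iJ) eqxx.
have rB : \rank B = d by apply/eqP.
have full : row_full (W + (coordJ k J)^T)%MS.
  rewrite /row_full mxrank_disjoint_sum // mxrank_ker mxrank_tr rB rank_coordJ cJ.
  by rewrite subnK // -rB rank_leq_col.
have /sub_addsmxP [[u1 u2] /= E] := submx_full v full.
exists (u1 *m W), (u2 *m (coordJ k J)^T); split => //.
  by apply/sub_kermxP; rewrite submxMl.
by apply: coordJ_supp; rewrite submxMl.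
Qed.

Lemma rowspace_coord_inj (v : 'rV[k]_n) :
  (v <= B)%MS -> (forall j, j \in J -> v 0 j = 0) -> v = 0.
Proof.
move=> vB vJ; apply/matrixP => r l; rewrite ord1 mxE.
have [w [u [E wB uJ]]] := ker_coord_decomp (delta_mx 0 l).
rewrite -dot_delta E dotD (dot_orth vB wB) add0r /dot big1 // => j _.
by case: (boolP (j \in J)) => jJ; [rewrite vJ ?mul0r | rewrite uJ ?mulr0].
Qed.

Lemma plane_coord_surj (y : 'rV[k]_n) :
  exists x, in_aplane p B x /\ forall j, j \in J -> x 0 j = y 0 j.
Proof.
have rBC : \rank (B *m coordJ k J) = \rank B.
  apply/mxrank_injP/rowV0P => v; rewrite sub_capmx => /andP [vB vC].
  apply: rowspace_coord_inj => // j jJ.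
  move/sub_kermxP: vC => /matrixP /(_ 0 (enum_rank_in jJ j)).
  by rewrite coordJ_col enum_rankK_in // mxE.
have fBC : row_full (B *m coordJ k J).
  by rewrite /row_full rBC cJ; exact: rfB.
have /submxP [z Ez] := submx_full ((y - p) *m coordJ k J) fBC.
exists (p + z *m B); split; first by rewrite /in_aplane addrC addKr submxMl.
move=> j jJ.
have : ((p + z *m B) *m coordJ k J) 0 (enum_rank_in jJ j) =
       (y *m coordJ k J) 0 (enum_rank_in jJ j).
  by rewrite mulmxDl -mulmxA -Ez mulmxBl addrC subrK.
by rewrite !coordJ_col enum_rankK_in.
Qed.

Lemma plane_free_vars : free_vars p B J.
Proof.
split => // y; have [x [xA xJ]] := plane_coord_surj y.
exists x; split => // x' [x'A x'J].
apply/eqP; rewrite -subr_eq0; apply/eqP; apply: rowspace_coord_inj.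
  move: xA x'A => /submxP [z1 E1] /submxP [z2 E2].
  have -> : x - x' = (z1 - z2) *m B by rewrite mulmxBl -E1 -E2 opprB addrA subrK.
  exact: submxMl.
by move=> j jJ; rewrite !mxE xJ // x'J // subrr.
Qed.

(* Exchanging j in J for a smaller i outside J destroys freeness: the linear
   form w of the annihilator with w_i = 1 vanishes at j (its last nonzero
   coordinate lies outside J, hence is i), so it forces x_i = p_i on the plane
   while the exchanged coordinates would allow any x_i. *)
Lemma plane_min_free_vars : min_free_vars p B J.
Proof.
split; first exact: plane_free_vars.
move=> [j [i [jJ iJ ij [_ free']]]].
have [w [u [E wB uJ]]] := ker_coord_decomp (delta_mx 0 i).
have wE l : l \notin J -> w 0 l = (l == i)%:R.
  by move=> lJ; move/matrixP: E => /(_ 0 l); rewrite !mxE (uJ _ lJ) addr0 eqxx => ->.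
have wi : w 0 i = 1 by rewrite wE // eqxx.
have wj : w 0 j = 0.
  have wn0 : w != 0 by apply: contra_neq (oner_neq0 k) => w0; rewrite -wi w0 mxE.
  have [i0 [wi0 wl]] := exists_last_nz wn0.
  have i0J := last_out wB (conj wi0 wl).
  have i0i : i0 = i by apply/eqP; apply: contraLR wi0; rewrite wE // => /negbTE ->; rewrite eqxx.
  by apply: wl; rewrite i0i.
have [x [[xA xJ'] _]] := free' (p + delta_mx 0 i).
have xJ l : l \in i |: (J :\ j) -> x 0 l = p 0 l + (l == i)%:R.
  by move=> lJ'; rewrite xJ' // !mxE eqxx.
have := dot_orth xA wB; rewrite /dot (bigD1 i) //= big1.
  rewrite addr0 wi mulr1 mxE xJ; last by rewrite !inE eqxx.
  by rewrite eqxx mxE addrAC subrr add0r => /eqP; rewrite oner_eq0.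
move=> l li; case: (eqVneq l j) => [->|lj]; first by rewrite wj mulr0.
case: (boolP (l \in J)) => lJ; last by rewrite (wE _ lJ) (negbTE li) mulr0.
by rewrite !mxE xJ ?(negbTE li) ?addr0 ?subrr ?mul0r // !inE (negbTE li) lj lJ.
Qed.
End MinimalFreeVariables.

Lemma not_min_free (k : fieldType) n (le : rel (mon n)) d (p : 'rV[k]_n)
    (B : 'M[k]_(d, n)) (J : {set 'I_n}) :
  term_order le -> vars_increasing le -> row_free B -> #|J| = d ->
  ~ min_free_vars p B J -> exists2 i, i \in J & Cset le (in_aplane p B) (munit i).
Proof.
move=> Hto Hvi rfB cJ Hnm; apply: NNPP => Hno; apply: Hnm.
apply: plane_min_free_vars => // a i aB ai; apply/negP => iJ.
by apply: Hno; exists i => //; apply: lin_Cset aB ai.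
Qed.

Lemma nplane_shift n (g : mon n) (J : {set 'I_n}) e v :
  nplane g J e -> supp_in J v -> nplane g J (madd e v).
Proof.
move=> [t [tJ ->]] vJ; exists (madd t v); split; last by rewrite maddA.
exact: supp_in_madd.
Qed.

Lemma dplane_mono n d (D1 D2 : mon n -> Prop) g J :
  (forall e, D1 e -> D2 e) -> dplane_in d D1 g J -> dplane_in d D2 g J.
Proof. by move=> H [c z P]; split => // e /P; apply: H. Qed.

(* If e in g + N^J were in C(A_J), multiplying its polynomial by an
   affine equation X_i - ... (i in J) of every component of A whose minimal
   free variables are not J would give a point e + v of g + N^J in C(A). *)
Lemma dplane_DA_DAJ (k : fieldType) (n d m : nat) (le : rel (mon n))
    (p : 'I_m -> 'rV[k]_n) (B : 'I_m -> 'M[k]_(d, n)) (J : {set 'I_n}) g :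
  term_order le -> vars_increasing le -> (forall i, row_free (B i)) ->
  dplane_in d (Dset le (fun x => exists i, in_aplane (p i) (B i) x)) g J ->
  dplane_in d (Dset le (fun x => exists i,
                  min_free_vars (p i) (B i) J /\ in_aplane (p i) (B i) x)) g J.
Proof.
set AJ := fun x => exists i, _ /\ _.
move=> Hto Hvi rf [cJ gJ inD]; split => // e ge CAJ.
have split_comps c : c \in enum 'I_m ->
    (forall x, in_aplane (p c) (B c) x -> AJ x) \/
    exists2 i, i \in J & Cset le (in_aplane (p c) (B c)) (munit i).
  move=> _; case: (classic (min_free_vars (p c) (B c) J)) => Hc.
    by left => x xc; exists c.
  by right; apply: not_min_free.
have [v [vJ Cv]] := Cset_shift_union Hto CAJ split_comps.
apply: (inD _ (nplane_shift ge vJ)); apply: Cset_mono Cv _ => x [i xi].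
by right; exists i; rewrite ?mem_enum.
Qed.

Theorem mainTheorem3 (k : fieldType) (n d m : nat) (le : rel (mon n))
  (p : 'I_m -> 'rV[k]_n) (B : 'I_m -> 'M[k]_(d, n)) :
  (* k infinite *)
  (forall s : seq k, exists x : k, x \notin s) ->
  term_order le -> vars_increasing le ->
  (* each component is an affine d-plane *)
  (forall i, row_free (B i)) ->
  (* pairwise distinct *)
  (forall i j, i != j -> ~ (forall x, in_aplane (p i) (B i) x <-> in_aplane (p j) (B j) x)) ->
  let A := fun x => exists i, in_aplane (p i) (B i) x in
  let AJ := fun (J : {set 'I_n}) x =>
              exists i, min_free_vars (p i) (B i) J /\ in_aplane (p i) (B i) x in
  let mJ := fun (J : {set 'I_n}) => pcard (fun i => min_free_vars (p i) (B i) J) in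
  (forall J : {set 'I_n}, #|J| = d ->
     (forall g J', dplane_in d (Dset le (AJ J)) g J' -> J' = J) /\
     card_eq (fun g => dplane_in d (Dset le (AJ J)) g J) (mJ J)) ->
  (forall e, Eset d (Dset le A) e <->
             exists J : {set 'I_n}, #|J| = d /\ Eset d (Dset le (AJ J)) e) /\
  (forall J : {set 'I_n}, #|J| = d ->
     card_eq (fun g => dplane_in d (Dset le A) g J) (mJ J)).
Proof.
move=> _ Hto Hvi rf _ A AJ mJ Hyp.
(* Since A_J is part of A, D(A_J) lies in D(A); conversely d-planes of D(A)
   parallel to N^J lie in D(A_J). *)
have widen J J' g : dplane_in d (Dset le (AJ J)) g J' -> dplane_in d (Dset le A) g J'.
  by apply: dplane_mono => e; apply: Dset_mono => x [i [_ xi]]; exists i.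
have restrict J g : dplane_in d (Dset le A) g J -> dplane_in d (Dset le (AJ J)) g J.
  exact: dplane_DA_DAJ.
split=> [e|J cJ].
  split=> [[g [J [gJ ge]]]|[J [_ [g [J' [gJ' ge]]]]]].
    by exists J; split; [case: gJ | exists g, J; split => //; apply: restrict].
  by exists g, J'; split => //; apply: widen gJ'.
have [_ [s [us Hs sz]]] := Hyp J cJ.
exists s; split => // g; rewrite Hs; split; [exact: widen | exact: restrict].
Qed.
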